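(* Consider a scenario tree with node sets $\mathcal{N}(0)=\{0\},\mathcal{N}(1),\ldots,\mathcal{N}(t+1)$ and let $(\rho_{|0},\ldots,\rho_{|t})$ be a sequence of conditional risk mappings on this tree, each built from coherent risk measures, with $\rho_{|j}:\mathbb{R}^{|\mathcal{N}(j+1)|}\to\mathbb{R}^{|\mathcal{N}(j)|}$. Let $\bar\rho_t:\mathbb{R}^{|\mathcal{N}(t+1)|}\to\mathbb{R}$ be the nested risk measure $\bar\rho_t[Y]=\rho_{|0}[\rho_{|1}[\cdots\rho_{|t}[Y]\cdots]]$. Then $$\operatorname{epi}\bar\rho_t=\Big\{(Y_{t+1},Y_0)\in\mathbb{R}^{|\mathcal{N}(t+1)|+1}\ \Big|\ \exists\,(Y_j)_{j=1}^{t},\ Y_j\in\mathbb{R}^{|\mathcal{N}(j)|},\ (Y_{j+1},Y_j)\in\operatorname{epi}\rho_{|j}\ \text{for all } j\in\{0,1,\ldots,t\}\Big\}.$$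
   Context: A scenario tree: nodes are partitioned into stages, $\mathcal{N}(j)$ being the nodes at stage $j$, with the single root $0$ at stage $0$ visited with probability $\pi^0=1$; each node $i$ is visited with probability $\pi^i>0$, each non-root node has a unique ancestor, and each node $i\in\mathcal{N}(j)$ has a set of children $\mathrm{ch}(i)\subseteq\mathcal{N}(j+1)$, the sets $\mathrm{ch}(i)$, $i\in\mathcal{N}(j)$, partitioning $\mathcal{N}(j+1)$; $\mathrm{ch}(i)$ is a probability space with probability vector $\pi^{[i]}=\frac{1}{\pi^i}(\pi^{i_+})_{i_+\in\mathrm{ch}(i)}$. A coherent risk measure $\rho:\mathbb{R}^k\to\mathbb{R}$ (on a finite probability space) satisfies, for all $Z,Z'$, $c\in\mathbb{R}$, $\lambda\in[0,1]$, $\alpha\ge0$: convexity $\rho[\lambda Z+(1-\lambda)Z']\le\lambda\rho[Z]+(1-\lambda)\rho[Z']$; monotonicity $\rho[Z]\le\rho[Z']$ if $Z\le Z'$ componentwise; translation equivariance $\rho[Z+c\mathbf{1}]=\rho[Z]+c$; positive homogeneity $\rho[\alpha Z]=\alpha\rho[Z]$. Given coherent risk measures $\rho^i:\mathbb{R}^{|\mathrm{ch}(i)|}\to\mathbb{R}$ on $\mathrm{ch}(i)$ for each $i\in\mathcal{N}(j)$, the conditional risk mapping at stage $j$ is $\rho_{|j}[Z]=(\rho^i[Z^{[i]}])_{i\in\mathcal{N}(j)}$ for $Z=(Z^{i_+})_{i_+\in\mathcal{N}(j+1)}$, where $Z^{[i]}=(Z^{i_+})_{i_+\in\mathrm{ch}(i)}$.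 Its epigraph is $\operatorname{epi}\rho_{|j}=\{(Y_{j+1},Y_j)\in\mathbb{R}^{|\mathcal{N}(j+1)|+|\mathcal{N}(j)|}\mid \rho_{|j}[Y_{j+1}]\le Y_j\text{ componentwise}\}$. For a real-valued $\rho$, $\operatorname{epi}\rho=\{(Y,\gamma)\mid\rho[Y]\le\gamma\}$. *)

From HB Require Import structures.
From mathcomp Require Import all_boot all_order all_algebra.
From mathcomp Require Import reals.
Set Implicit Arguments. Unset Strict Implicit. Unset Printing Implicit Defensive.
Import Order.TTheory GRing.Theory Num.Theory.
Local Open Scope ring_scope.

(* A scenario tree is given by the node types N j (stage j), and the ancestor
   maps anc j : N (j+1) -> N j.  The children of i : N j are the nodes of
   stage j+1 whose ancestor is i. *)
Definition child (N : nat -> finType) (anc : forall j, N j.+1 -> N j)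
  (j : nat) (i : N j) : finType := {k : N j.+1 | anc j k == i}.

Definition coherent (R : realType) (T : finType) (rho : (T -> R) -> R) : Prop :=
  [/\ (forall (Z Z' : T -> R) (l : R), 0 <= l <= 1 ->
         rho (fun x => l * Z x + (1 - l) * Z' x) <= l * rho Z + (1 - l) * rho Z'),
      (forall Z Z' : T -> R, (forall x, Z x <= Z' x) -> rho Z <= rho Z'),
      (forall (Z : T -> R) (c : R), rho (fun x => Z x + c) = rho Z + c) &
      (forall (Z : T -> R) (a : R), 0 <= a -> rho (fun x => a * Z x) = a * rho Z)].

Section Tree.
Variables (R : realType) (N : nat -> finType) (anc : forall j, N j.+1 -> N j).
Variable rho : forall j (i : N j), (child anc i -> R) -> R.

Definition cond_map (j : nat) (Z : N j.+1 -> R) : N j -> R :=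
  fun i => rho (fun c : child anc i => Z (val c)).

Definition epi_cond (j : nat) (p : (N j.+1 -> R) * (N j -> R)) : Prop :=
  forall i : N j, cond_map p.1 i <= p.2 i.

Fixpoint cond_comp (n : nat) : (N n -> R) -> (N 0%N -> R) :=
  match n with
  | 0 => fun Y => Y
  | m.+1 => fun Y => cond_comp (cond_map Y)
  end.

Definition nested (t : nat) (r : N 0%N) (Y : N t.+1 -> R) : R :=
  cond_comp Y r.

Definition epi_nested (t : nat) (r : N 0%N) (p : (N t.+1 -> R) * R) : Prop :=
  nested r p.1 <= p.2.
End Tree.

From HB Require Import structures.
From mathcomp Require Import all_boot all_order all_algebra.
From mathcomp Require Import reals.
Set Implicit Arguments. Unset Strict Implicit. Unset Printing Implicit Defensive.
Import Order.TTheory GRing.Theory Num.Theory.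
Local Open Scope ring_scope.

(* Only monotonicity of the coherent risk measures matters.  If every
   rho_{|j} is monotone, composing the inequalities rho_{|j}[Y_{j+1}] <= Y_j
   along a chain of epigraph points yields bar rho_t[Y_{t+1}] <= Y_0.
   Conversely, the exact values Y_j := rho_{|j}[...rho_{|t}[Y_{t+1}]...]
   satisfy every epigraph condition with equality, and the stage-0 value may
   then be raised to any gamma >= bar rho_t[Y_{t+1}]. *)

Section EpigraphChains.
Variables (R : realType) (N : nat -> finType) (anc : forall j, N j.+1 -> N j).
Variable rho : forall j (i : N j), (child anc i -> R) -> R.

Definition monotone_risk (T : finType) (f : (T -> R) -> R) : Prop :=
  forall Z Z' : T -> R, (forall x, Z x <= Z' x) -> f Z <= f Z'.

Lemma coherent_monotone (T : finType) (f : (T -> R) -> R) :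
  coherent f -> monotone_risk f.
Proof. by case. Qed.

Definition epi_chain (n : nat) (Ys : forall j, N j -> R) : Prop :=
  forall j, (j < n)%N -> epi_cond rho (Ys j.+1, Ys j).

Lemma cond_comp_monotone n :
  (forall j (i : N j), (j < n)%N -> monotone_risk (@rho j i)) ->
  forall Z Z' : N n -> R, (forall x, Z x <= Z' x) ->
  forall i, cond_comp rho Z i <= cond_comp rho Z' i.
Proof.
elim: n => [|n IH] mono Z Z' leZ i /=; first exact: leZ.
apply: IH => [j k ltjn|x]; first by apply: mono; rewrite ltnS ltnW.
by apply: (mono n x (ltnSn n)) => c.
Qed.

Lemma cond_comp_le_of_epi_chain n (Ys : forall j, N j -> R) :
  (forall j (i : N j), (j < n)%N -> monotone_risk (@rho j i)) ->
  epi_chain n Ys -> forall i, cond_comp rho (Ys n) i <= Ys 0%N i.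
Proof.
elim: n => [|n IH] mono chain i //=.
have mono' j (k : N j) : (j < n)%N -> monotone_risk (@rho j k).
  by move=> ltjn; apply: mono; rewrite ltnS ltnW.
apply: le_trans (IH mono' _ i) => [|j ltjn]; last by apply: chain; rewrite ltnS ltnW.
by apply: cond_comp_monotone mono' _ _ _ i => x; apply: chain.
Qed.

Lemma exists_exact_chain n (Y : N n -> R) :
  exists Ys : forall j, N j -> R,
    [/\ Ys n = Y, Ys 0%N = cond_comp rho Y &
        forall j, (j < n)%N -> cond_map rho (Ys j.+1) = Ys j].
Proof.
elim: n Y => [|n IH] Y.
  by exists (dfwith (fun j (_ : N j) => 0) Y); split; rewrite ?dfwith_in.
have [Ys [top bot step]] := IH (cond_map rho Y).
exists (dfwith Ys Y); split => [||j ltjn]; first exact: dfwith_in.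
  by rewrite dfwith_out.
have [->|nejn] := eqVneq j n; first by rewrite dfwith_in dfwith_out ?top ?gtn_eqF.
have ltjn' : (j < n)%N by rewrite ltn_neqAle nejn -ltnS.
by rewrite !dfwith_out ?step ?gtn_eqF // ltnS.
Qed.

Lemma epi_chain_of_cond_comp_le n (Y : N n.+1 -> R) (Y0 : N 0%N -> R) :
  (forall i, cond_comp rho Y i <= Y0 i) ->
  exists Ys : forall j, N j -> R,
    [/\ Ys n.+1 = Y, Ys 0%N = Y0 & epi_chain n.+1 Ys].
Proof.
move=> leY0; have [Ys [top bot step]] := exists_exact_chain Y.
exists (dfwith Ys Y0); split; [by rewrite dfwith_out | exact: dfwith_in |].
case=> [|j] ltjn i; rewrite /epi_cond /=.
  by rewrite dfwith_in dfwith_out // step // bot.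
by rewrite !dfwith_out // step.
Qed.

End EpigraphChains.

Theorem proposition1 (R : realType) (t : nat) (N : nat -> finType)
  (anc : forall j, N j.+1 -> N j) (pi : forall j, N j -> R) (r : N 0%N)
  (rho : forall j (i : N j), (child anc i -> R) -> R)
  (Hroot : forall x : N 0%N, x = r)
  (Hpi_root : pi 0%N r = 1)
  (Hpi_pos : forall j (i : N j), (j <= t.+1)%N -> 0 < pi j i)
  (Hpi_sum : forall j (i : N j), (j <= t)%N ->
      pi j i = \sum_(k : N j.+1 | anc j k == i) pi j.+1 k)
  (Hcoh : forall j (i : N j), (j <= t)%N -> coherent (rho j i)) :
  forall (Y : N t.+1 -> R) (gamma : R),
    epi_nested rho r (Y, gamma) <->
    exists Ys : forall j, N j -> R,
      [/\ Ys t.+1 = Y, Ys 0%N r = gamma &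
          forall j, (j <= t)%N -> epi_cond rho (Ys j.+1, Ys j)].
Proof.
move=> Y gamma; rewrite /epi_nested /nested /=; split => [le_gamma | ].
  have le_root i : cond_comp rho Y i <= gamma by rewrite (Hroot i).
  have [Ys [top bot chain]] := epi_chain_of_cond_comp_le le_root.
  by exists Ys; rewrite bot.
case=> Ys [<- <- chain].
have mono j (i : N j) : (j < t.+1)%N -> monotone_risk (rho j i).
  by move=> le_jt; apply/coherent_monotone/Hcoh.
exact: cond_comp_le_of_epi_chain mono chain r.
Qed.
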